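(* Assume that at each bus either there is no generator or there are at least two generators ($n_i=0$ or $n_i\ge2$ for all $i$), and that the optimizer $x^*$ of the DC-OPF problem satisfies $x^*_n>0$ for all $n$. Then the inelastic electricity market game has a unique efficient Nash equilibrium $b^*$, given by $b^*_n=2a_nx^*_n+c_n$ for all $n$.
   Context: Network: a directed graph $\mathcal G=(\mathcal V,\mathcal E)$ with buses $\mathcal V=\{1,\dots,N_b\}$ and power lines $\mathcal E$; $\mathcal N_i^+=\{j:(i,j)\in\mathcal E\}$, $\mathcal N_i^-=\{j:(j,i)\in\mathcal E\}$. Each line $(i,j)$ carries flow $z_{ij}$ with limit $\bar z_{ij}>0$. There are $N$ generators; $G_i$ is the (possibly empty) set of generators at bus $i$, the $G_i$ partition $\{1,\dots,N\}$, $n_i=|G_i|$. Bus $i$ has load $y_i\ge0$. Generator $n$ has cost $f_n(x)=a_nx^2+c_nx$, $a_n>0$, $c_n\ge0$. DC-OPF: minimize $\sum_n f_n(x_n)$ s.t. $\sum_{j\in\mathcal N_i^+}z_{ij}-\sum_{j\in\mathcal N_i^-}z_{ji}=\sum_{n\in G_i}x_n-y_i$ for all $i$, $|z_{ij}|\le\bar z_{ij}$ for all $(i,j)\in\mathcal E$, $x\ge0$; assumed feasible with optimizer $(x^*,z^* )$, $x^*$ unique. S-DC-OPF given bids $b\ge0$: same constraints, objective $\sum_n b_nx_n$. Game: players are generators, actions bids $b_n\ge0$; given an optimizer $x^{\rm opt}(b)$ of S-DC-OPF chosen by the operator, payoff $u_n=b_nx^{\rm opt}_n(b)-f_n(x^{\rm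 opt}_n(b))$. Nash equilibrium: $b^*\ge0$ for which some optimizer $x^{\rm opt}(b^* )$ of S-DC-OPF$(b^* )$ satisfies, for all $n$, all $b_n\ge0$ and all optimizers $x^{\rm opt}(b_n,b^*_{-n})$ of S-DC-OPF$(b_n,b^*_{-n})$, $u_n(b_n,x^{\rm opt}_n(b_n,b^*_{-n}))\le u_n(b^*_n,x^{\rm opt}_n(b^* ))$. Efficient bid: $b^*\ge0$ such that $(x^*,z^* )$ optimizes S-DC-OPF$(b^* )$ and $x^*_n=\arg\max_{x\ge0}(b^*_nx-f_n(x))$ for all $n$. Efficient Nash equilibrium: an efficient bid that is a Nash equilibrium. *)

From HB Require Import structures.
From mathcomp Require Import all_boot all_order all_algebra.
Set Implicit Arguments. Unset Strict Implicit. Unset Printing Implicit Defensive.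
Import Order.TTheory GRing.Theory Num.Theory.
Local Open Scope ring_scope.

(* Network data:
   - buses are 'I_Nb;
   - E : {set 'I_Nb * 'I_Nb} is the set of (directed) lines (i,j);
   - a flow is z : 'I_Nb -> 'I_Nb -> R (only values z i j for (i,j) \in E matter);
   - zbar i j is the line limit of (i,j);
   - generators are 'I_N, loc n is the bus of generator n, so that
     G_i = [set n | loc n == i] (the G_i partition the generators);
   - y i is the load at bus i;
   - generator n has cost f_n(x) = a n * x^2 + c n * x. *)

Definition gen_set (Nb N : nat) (loc : 'I_N -> 'I_Nb) (i : 'I_Nb) : {set 'I_N} :=
  [set n | loc n == i].

Definition cost (R : realFieldType) (N : nat) (a c : 'I_N -> R) (n : 'I_N) (x : R) : R :=
  a n * x ^+ 2 + c n * x.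

Definition feasible (R : realFieldType) (Nb N : nat) (E : {set 'I_Nb * 'I_Nb})
    (zbar : 'I_Nb -> 'I_Nb -> R) (loc : 'I_N -> 'I_Nb) (y : 'I_Nb -> R)
    (x : 'I_N -> R) (z : 'I_Nb -> 'I_Nb -> R) : Prop :=
  (forall i : 'I_Nb,
      \sum_(j : 'I_Nb | (i, j) \in E) z i j - \sum_(j : 'I_Nb | (j, i) \in E) z j i
      = \sum_(n in gen_set loc i) x n - y i)
  /\ (forall i j : 'I_Nb, (i, j) \in E -> `|z i j| <= zbar i j)
  /\ (forall n : 'I_N, 0 <= x n).

Definition dcopf_opt (R : realFieldType) (Nb N : nat) (E : {set 'I_Nb * 'I_Nb})
    (zbar : 'I_Nb -> 'I_Nb -> R) (loc : 'I_N -> 'I_Nb) (y : 'I_Nb -> R)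
    (a c : 'I_N -> R) (x : 'I_N -> R) (z : 'I_Nb -> 'I_Nb -> R) : Prop :=
  feasible E zbar loc y x z /\
  forall x' z', feasible E zbar loc y x' z' ->
    \sum_(n < N) cost a c n (x n) <= \sum_(n < N) cost a c n (x' n).

Definition sdcopf_opt (R : realFieldType) (Nb N : nat) (E : {set 'I_Nb * 'I_Nb})
    (zbar : 'I_Nb -> 'I_Nb -> R) (loc : 'I_N -> 'I_Nb) (y : 'I_Nb -> R)
    (b : 'I_N -> R) (x : 'I_N -> R) (z : 'I_Nb -> 'I_Nb -> R) : Prop :=
  feasible E zbar loc y x z /\
  forall x' z', feasible E zbar loc y x' z' ->
    \sum_(n < N) b n * x n <= \sum_(n < N) b n * x' n.

Definition payoff (R : realFieldType) (N : nat) (a c : 'I_N -> R) (n : 'I_N) (bn xn : R) : R :=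
  bn * xn - cost a c n xn.

Definition upd_bid (R : realFieldType) (N : nat) (b : 'I_N -> R) (n : 'I_N) (bn : R) : 'I_N -> R :=
  fun m => if m == n then bn else b m.

Definition nonneg_bid (R : realFieldType) (N : nat) (b : 'I_N -> R) : Prop :=
  forall n, 0 <= b n.

Definition nash_eq (R : realFieldType) (Nb N : nat) (E : {set 'I_Nb * 'I_Nb})
    (zbar : 'I_Nb -> 'I_Nb -> R) (loc : 'I_N -> 'I_Nb) (y : 'I_Nb -> R)
    (a c : 'I_N -> R) (b : 'I_N -> R) : Prop :=
  nonneg_bid b /\
  exists (xo : 'I_N -> R) (zo : 'I_Nb -> 'I_Nb -> R),
    sdcopf_opt E zbar loc y b xo zo /\
    forall (n : 'I_N) (bn : R), 0 <= bn ->
      forall x' z', sdcopf_opt E zbar loc y (upd_bid b n bn) x' z' ->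
        payoff a c n bn (x' n) <= payoff a c n (b n) (xo n).

Definition efficient_bid (R : realFieldType) (Nb N : nat) (E : {set 'I_Nb * 'I_Nb})
    (zbar : 'I_Nb -> 'I_Nb -> R) (loc : 'I_N -> 'I_Nb) (y : 'I_Nb -> R)
    (a c : 'I_N -> R) (xs : 'I_N -> R) (zs : 'I_Nb -> 'I_Nb -> R) (b : 'I_N -> R) : Prop :=
  nonneg_bid b /\
  sdcopf_opt E zbar loc y b xs zs /\
  forall n : 'I_N, 0 <= xs n /\
    forall x : R, 0 <= x -> b n * x - cost a c n x <= b n * xs n - cost a c n (xs n).

Definition efficient_nash_eq (R : realFieldType) (Nb N : nat) (E : {set 'I_Nb * 'I_Nb})
    (zbar : 'I_Nb -> 'I_Nb -> R) (loc : 'I_N -> 'I_Nb) (y : 'I_Nb -> R)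
    (a c : 'I_N -> R) (xs : 'I_N -> R) (zs : 'I_Nb -> 'I_Nb -> R) (b : 'I_N -> R) : Prop :=
  efficient_bid E zbar loc y a c xs zs b /\ nash_eq E zbar loc y a c b.

(** Marginal-cost bids [b*_n = 2 a_n x*_n + c_n] make [x*] optimal for
    S-DC-OPF: cost is convex and the feasible set is convex, so the
    first-order condition [sum_n b*_n (x'_n - x*_n) >= 0] holds at [x*].
    Moving all output of a generator to a bus-mate preserves feasibility,
    hence in any S-DC-OPF optimum [b_n x_n <= b_m x_n] for bus-mates [n, m];
    with [x* > 0] this gives [b*_m <= b*_n] for bus-mates, so a deviation
    [b_n > b*_n] cannot earn more than [b*_n] per unit sold, and at price
    [b*_n] the quantity [x*_n] is already profit-maximal.  Conversely, an
    efficient bid has its quadratic profit maximized at the interior point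
    [x*_n > 0], which forces it to equal the marginal cost there. *)
From HB Require Import structures.
From mathcomp Require Import all_boot all_order all_algebra.
From mathcomp Require Import ring lra.
Set Implicit Arguments. Unset Strict Implicit. Unset Printing Implicit Defensive.
Import Order.TTheory GRing.Theory Num.Theory.
Local Open Scope ring_scope.

Section RealFieldFacts.
Variable R : realFieldType.

Lemma linear_coef_ge0 (G H : R) :
  (forall t, 0 < t -> t <= 1 -> 0 <= t * G + t ^+ 2 * H) -> 0 <= G.
Proof.
move=> hGH; rewrite leNgt; apply/negP => G_lt0.
have hd : 0 < `|H| - G by have := normr_ge0 H; lra.
pose t := - G / (`|H| - G).
have t_gt0 : 0 < t by rewrite divr_gt0 // oppr_gt0.
have t_le1 : t <= 1 by rewrite ler_pdivrMr // mul1r; have := normr_ge0 H; lra.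
(* [t (|H| - G) = -G] makes [t G + t^2 |H|] collapse to [t^2 G < 0]. *)
have ht : t * (`|H| - G) = - G by rewrite divfK // gt_eqF.
have tH : t ^+ 2 * H <= t ^+ 2 * `|H| by rewrite ler_wpM2l ?sqr_ge0 ?ler_norm.
have collapse : t * G + t ^+ 2 * `|H| = t ^+ 2 * G.
  have -> : t ^+ 2 * `|H| = t * (t * (`|H| - G)) + t ^+ 2 * G by ring.
  by rewrite ht; ring.
have := hGH t t_gt0 t_le1.
have : 0 < t ^+ 2 * - G by rewrite mulr_gt0 ?exprn_gt0 ?oppr_gt0.
lra.
Qed.

Lemma quadratic_interior_max (A B C X : R) : 0 < X ->
  (forall x, 0 <= x -> B * x - (A * x ^+ 2 + C * x) <= B * X - (A * X ^+ 2 + C * X)) ->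
  B = 2 * A * X + C.
Proof.
move=> X_gt0 hmax; set u := B - C - 2 * A * X.
have step (s : R) : - X <= s -> u * s - A * s ^+ 2 <= 0.
  move=> hs; have := hmax (X + s) ltac:(lra).
  have -> : B * (X + s) - (A * (X + s) ^+ 2 + C * (X + s))
            = B * X - (A * X ^+ 2 + C * X) + (u * s - A * s ^+ 2) by rewrite /u; ring.
  lra.
have u_le0 : 0 <= - u * X.
  apply: linear_coef_ge0 (A * X ^+ 2) _ => t t_gt0 t_le1.
  have := step (t * X) ltac:(nra); lra.
have u_ge0 : 0 <= u * X.
  apply: linear_coef_ge0 (A * X ^+ 2) _ => t t_gt0 t_le1.
  have := step (- (t * X)) ltac:(nra); lra.
have uX0 : u * X = 0 by lra.
have : u = 0 by move/eqP: uX0; rewrite mulf_eq0 (gt_eqF X_gt0) orbF => /eqP.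
by rewrite /u; lra.
Qed.

Lemma marginal_bid_profit_max (A C X x : R) : 0 <= A ->
  (2 * A * X + C) * x - (A * x ^+ 2 + C * x)
    <= (2 * A * X + C) * X - (A * X ^+ 2 + C * X).
Proof. by move=> A_ge0; have := mulr_ge0 A_ge0 (sqr_ge0 (x - X)); nra. Qed.

Lemma sumr_if_eq (I : finType) (P : pred I) (m : I) (F : I -> R) :
  \sum_(k | P k) (if k == m then F k else 0) = if P m then F m else 0.
Proof.
rewrite -big_mkcondr /=; case: ifP => Pm.
  by rewrite (big_pred1 m) // => k /=; case: eqP => [->|]; rewrite ?Pm ?andbF.
by rewrite big_pred0 // => k; case: eqP => [->|]; rewrite ?Pm ?andbF.
Qed.

End RealFieldFacts.

Section Dispatch.
Variables (R : realFieldType) (Nb N : nat) (E : {set 'I_Nb * 'I_Nb}).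
Variables (zbar : 'I_Nb -> 'I_Nb -> R) (loc : 'I_N -> 'I_Nb) (y : 'I_Nb -> R).

Lemma feasible_convex (x x' : 'I_N -> R) (z z' : 'I_Nb -> 'I_Nb -> R) (t : R) :
  feasible E zbar loc y x z -> feasible E zbar loc y x' z' -> 0 <= t -> t <= 1 ->
  feasible E zbar loc y (fun k => (1 - t) * x k + t * x' k)
    (fun i j => (1 - t) * z i j + t * z' i j).
Proof.
move=> [bal [lim x_ge0]] [bal' [lim' x'_ge0]] t_ge0 t_le1.
have t'_ge0 : 0 <= 1 - t by lra.
split; [|split].
- move=> i; rewrite !big_split /= -!mulr_sumr.
  move/eqP: (bal i); rewrite subr_eq => /eqP ->.
  move/eqP: (bal' i); rewrite subr_eq => /eqP ->.
  ring.
- move=> i j hij; apply: le_trans (ler_normD _ _) _.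
  rewrite !normrM (ger0_norm t'_ge0) (ger0_norm t_ge0).
  have := ler_wpM2l t'_ge0 (lim _ _ hij); have := ler_wpM2l t_ge0 (lim' _ _ hij).
  lra.
- by move=> k; rewrite addr_ge0 ?mulr_ge0.
Qed.

Definition move_output (x : 'I_N -> R) (n m : 'I_N) : 'I_N -> R :=
  fun k => x k + (if k == m then x n else 0) - (if k == n then x n else 0).

Lemma feasible_move_output (x : 'I_N -> R) (z : 'I_Nb -> 'I_Nb -> R) (n m : 'I_N) :
  feasible E zbar loc y x z -> loc n = loc m -> n != m ->
  feasible E zbar loc y (move_output x n m) z.
Proof.
move=> [bal [lim x_ge0]] same_bus nm; split; [|split] => //.
  move=> i; rewrite bal /move_output sumrB big_split /= !sumr_if_eq /gen_set !inE same_bus.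
  by case: (loc m == i) => /=; ring.
move=> k; rewrite /move_output; have [->|kn] := eqVneq k n.
  by rewrite (negbTE nm) addr0 subrr.
by case: (k == m); rewrite subr0 ?addr0 ?addr_ge0.
Qed.

Lemma sum_move_output (b x : 'I_N -> R) (n m : 'I_N) :
  \sum_(k < N) b k * move_output x n m k =
  \sum_(k < N) b k * x k + b m * x n - b n * x n.
Proof.
rewrite /move_output.
under eq_bigr => k _ do rewrite mulrBr mulrDr !(fun_if (fun v => b k * v)) !mulr0.
by rewrite sumrB big_split /= !sumr_if_eq.
Qed.

Lemma sdcopf_opt_bid_le (b x : 'I_N -> R) (z : 'I_Nb -> 'I_Nb -> R) (n m : 'I_N) :
  sdcopf_opt E zbar loc y b x z -> loc n = loc m -> n != m ->
  b n * x n <= b m * x n.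
Proof.
move=> [feas opt] same_bus nm.
by have := opt _ _ (feasible_move_output feas same_bus nm); rewrite sum_move_output; lra.
Qed.

End Dispatch.

Section MarketGame.
Variables (R : realFieldType) (Nb N : nat) (E : {set 'I_Nb * 'I_Nb}).
Variables (zbar : 'I_Nb -> 'I_Nb -> R) (loc : 'I_N -> 'I_Nb) (y : 'I_Nb -> R).
Variables (a c : 'I_N -> R) (xs : 'I_N -> R) (zs : 'I_Nb -> 'I_Nb -> R).
Hypothesis a_ge0 : forall n, 0 <= a n.

Definition marginal_bid (n : 'I_N) : R := 2 * a n * xs n + c n.

Lemma cost_along_segment (x : 'I_N -> R) (t : R) :
  \sum_(n < N) cost a c n ((1 - t) * xs n + t * x n)
  = \sum_(n < N) cost a c n (xs n)
    + t * \sum_(n < N) marginal_bid n * (x n - xs n)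
    + t ^+ 2 * \sum_(n < N) a n * (x n - xs n) ^+ 2.
Proof.
rewrite !mulr_sumr -!big_split /=.
by apply: eq_bigr => n _; rewrite /cost /marginal_bid; ring.
Qed.

Lemma dcopf_opt_marginal_bid :
  dcopf_opt E zbar loc y a c xs zs -> sdcopf_opt E zbar loc y marginal_bid xs zs.
Proof.
move=> [feas opt]; split=> // x z feas_x; rewrite -subr_ge0 -sumrB.
under eq_bigr do rewrite -mulrBr.
apply: linear_coef_ge0 (\sum_(n < N) a n * (x n - xs n) ^+ 2) _ => t t_gt0 t_le1.
have := opt _ _ (feasible_convex feas feas_x (ltW t_gt0) t_le1).
rewrite cost_along_segment; lra.
Qed.

Lemma nonneg_marginal_bid :
  (forall n, 0 <= c n) -> (forall n, 0 <= xs n) -> nonneg_bid marginal_bid.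
Proof. by move=> c_ge0 xs_ge0 n; rewrite addr_ge0 ?mulr_ge0. Qed.

Lemma efficient_marginal_bid :
  (forall n, 0 <= c n) -> (forall n, 0 <= xs n) ->
  dcopf_opt E zbar loc y a c xs zs ->
  efficient_bid E zbar loc y a c xs zs marginal_bid.
Proof.
move=> c_ge0 xs_ge0 opt; split; first exact: nonneg_marginal_bid.
split; first exact: dcopf_opt_marginal_bid.
by move=> n; split=> // x _; apply: marginal_bid_profit_max.
Qed.

Lemma nash_marginal_bid :
  (forall n, 0 <= c n) -> (forall n, 0 < xs n) ->
  (forall n, exists2 m, loc m = loc n & m != n) ->
  dcopf_opt E zbar loc y a c xs zs ->
  nash_eq E zbar loc y a c marginal_bid.
Proof.
move=> c_ge0 xs_gt0 mate opt.
have xs_ge0 n : 0 <= xs n by exact: ltW.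
have opt_b := dcopf_opt_marginal_bid opt.
split; first exact: nonneg_marginal_bid.
exists xs, zs; split=> // n bn _ x z opt_dev.
have x_ge0 : 0 <= x n by case: opt_dev => [[_ [_ /(_ n)]]].
suff revenue : bn * x n <= marginal_bid n * x n.
  have := marginal_bid_profit_max (c n) (xs n) (x n) (a_ge0 n).
  by move: revenue; rewrite /payoff /cost /marginal_bid; lra.
have [bn_le|_] := lerP bn (marginal_bid n); first exact: ler_wpM2r.
have [m same_bus mn] := mate n.
have mate_le : marginal_bid m <= marginal_bid n.
  by rewrite -(ler_pM2r (xs_gt0 m)); apply: sdcopf_opt_bid_le opt_b same_bus mn.
apply: le_trans (ler_wpM2r x_ge0 mate_le).
have nm : n != m by rewrite eq_sym.
by have := sdcopf_opt_bid_le opt_dev (esym same_bus) nm; rewrite /upd_bid eqxx (negbTE mn).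
Qed.

Lemma efficient_bidE (b : 'I_N -> R) (n : 'I_N) : 0 < xs n ->
  efficient_bid E zbar loc y a c xs zs b -> b n = marginal_bid n.
Proof.
move=> xs_gt0 [_ [_ profit_max]].
by have [_ max_n] := profit_max n; apply: quadratic_interior_max xs_gt0 max_n.
Qed.

End MarketGame.

Lemma mem_gen_set_loc (Nb N : nat) (loc : 'I_N -> 'I_Nb) (n : 'I_N) :
  n \in gen_set loc (loc n).
Proof. by rewrite inE. Qed.

Lemma gen_set_mate (Nb N : nat) (loc : 'I_N -> 'I_Nb) (n : 'I_N) :
  (1 < #|gen_set loc (loc n)|)%N -> exists2 m, loc m = loc n & m != n.
Proof.
rewrite (cardsD1 n) mem_gen_set_loc add1n ltnS => /card_gt0P [m].
by rewrite !inE => /andP [mn /eqP same_bus]; exists m.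
Qed.

Theorem corollary3p3 (R : realFieldType) (Nb N : nat)
    (E : {set 'I_Nb * 'I_Nb}) (zbar : 'I_Nb -> 'I_Nb -> R)
    (loc : 'I_N -> 'I_Nb) (y : 'I_Nb -> R) (a c : 'I_N -> R)
    (xs : 'I_N -> R) (zs : 'I_Nb -> 'I_Nb -> R)
    (hzbar : forall i j : 'I_Nb, (i, j) \in E -> 0 < zbar i j)
    (hy : forall i : 'I_Nb, 0 <= y i)
    (ha : forall n : 'I_N, 0 < a n)
    (hc : forall n : 'I_N, 0 <= c n)
    (hopt : dcopf_opt E zbar loc y a c xs zs)
    (huniq : forall x z, dcopf_opt E zbar loc y a c x z -> forall n, x n = xs n)
    (hbus : forall i : 'I_Nb, #|gen_set loc i| = 0%N \/ (2 <= #|gen_set loc i|)%N)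
    (hpos : forall n : 'I_N, 0 < xs n) :
  efficient_nash_eq E zbar loc y a c xs zs (fun n => 2 * a n * xs n + c n) /\
  forall b : 'I_N -> R, efficient_nash_eq E zbar loc y a c xs zs b ->
    forall n : 'I_N, b n = 2 * a n * xs n + c n.
Proof.
have a_ge0 n : 0 <= a n by exact: ltW.
have mate n : exists2 m, loc m = loc n & m != n.
  apply: gen_set_mate; case: (hbus (loc n)) => // /card0_eq/(_ n).
  by rewrite mem_gen_set_loc.
split; first split.
- by apply: efficient_marginal_bid => // n; exact: ltW.
- exact: nash_marginal_bid a_ge0 hc hpos mate hopt.
- by move=> b [efficient _] n; apply: efficient_bidE efficient.
Qed.
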